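(* Let $n$ be a positive integer with $n \equiv 0 \pmod 6$. Let $\mathcal{H}$ be the collection of subgroups of $S_n$ consisting of: all stabilizers in $S_n$ of partitions of $\{1,\dots,n\}$ into two blocks of size $n/2$; the alternating group $A_n$; and, for each $1\le i\le n/3-1$, all setwise stabilizers in $S_n$ of $i$-element subsets of $\{1,\dots,n\}$. Then the union of the subgroups in $\mathcal{H}$ is all of $S_n$, i.e. $\mathcal{H}$ is a cover of $S_n$.
   Context: $S_n$ is the symmetric group on $\{1,\dots,n\}$. The stabilizer of a partition $\{B_1,B_2\}$ is the set of $g\in S_n$ with $\{B_1^g,B_2^g\}=\{B_1,B_2\}$ (a subgroup isomorphic to $S_{n/2}\wr S_2$); the setwise stabilizer of an $i$-subset is isomorphic to $S_i\times S_{n-i}$. A cover of a group is a collection of proper subgroups whose union is the group. *)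

From mathcomp Require Import all_boot all_fingroup all_solvable.
Set Implicit Arguments. Unset Strict Implicit. Unset Printing Implicit Defensive.
Local Open Scope group_scope.

(* S_n is {perm 'I_n}, acting on the points 'I_n = {0,...,n-1}. *)

Definition part_stab (n : nat) (B : {set 'I_n}) : {set {perm 'I_n}} :=
  [set g : {perm 'I_n} | [set g @: B; g @: (~: B)] == [set B; ~: B]].

Definition set_stab (n : nat) (A : {set 'I_n}) : {set {perm 'I_n}} :=
  [set g : {perm 'I_n} | g @: A == A].

Definition cover_family (n : nat) : {set {set {perm 'I_n}}} :=
  [set part_stab B | B : {set 'I_n} & #|B| == n %/ 2]
  :|: [set ('Alt_('I_n) : {set {perm 'I_n}})]
  :|: [set set_stab A | A : {set 'I_n} & (1 <= #|A| <= n %/ 3 - 1)].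

Definition is_cover (gT : finGroupType) (G : {set gT}) (C : {set {set gT}}) :=
  (forall H, H \in C -> group_set H /\ H \proper G) /\
  \bigcup_(H in C) H = G.

(* An even permutation lies in A_n. An odd permutation g of the n points (n even)
   has an odd number of cycles. If one of them has fewer than n/3 points, g
   stabilizes it setwise. Otherwise an odd number of cycles of length >= n/3
   forces either a single n-cycle or three cycles of length n/3; as 6 divides n,
   every cycle has even length, so colouring each cycle alternately yields a set
   B with |B| = n/2 that g maps onto its complement, and g stabilizes {B, ~B}.
   Each stabilizer is a point stabilizer of the action induced on subsets (or on
   sets of subsets), hence a subgroup; a transposition shows it is proper. *)

From mathcomp Require Import all_boot all_fingroup all_solvable.
From mathcomp Require Import zify.
Set Implicit Arguments. Unset Strict Implicit. Unset Printing Implicit Defensive.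

Local Open Scope group_scope.

Section PermImage.
Variable T : finType.
Implicit Types (g : {perm T}) (A B : {set T}).

Lemma eq_setC_pair A B : ([set A; ~: A] == [set B; ~: B]) = (A == B) || (A == ~: B).
Proof.
case: (eqVneq A B) => [-> | neqB]; first by rewrite eqxx.
case: (eqVneq A (~: B)) => [-> | neqCB]; first by rewrite setCK setUC eqxx.
apply/negbTE/eqP => eq2; have : A \in [set A; ~: A] by rewrite !inE eqxx.
by rewrite eq2 !inE (negbTE neqB) (negbTE neqCB).
Qed.

Lemma perm_setactE g A : ('P^*)%act A g = g @: A.
Proof. exact: setactE. Qed.

Lemma perm_setsetactE g (S : {set {set T}}) :
  ('P^*^*)%act S g = [set g @: A | A : {set T} in S].
Proof. exact: setactE. Qed.

Lemma mem_perm_imset g A x : (g x \in g @: A) = (x \in A).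
Proof. exact/mem_imset/perm_inj. Qed.

Lemma perm_imsetC g A : g @: (~: A) = ~: (g @: A).
Proof. by apply/setP=> y; rewrite -[y](permKV g) inE !mem_perm_imset inE. Qed.

Lemma porbit_perm_imset g x : g @: porbit g x = porbit g x.
Proof.
have gN : g \in 'N(porbit g x | 'P).
  by rewrite porbitE; apply: subsetP (acts_orbit _ _ (subsetT _)) _ (cycle_id g).
by rewrite -perm_setactE; exact: astabs_setact.
Qed.

Lemma partition_porbits g : partition (porbits g) [set: T].
Proof.
have ->: porbits g = orbit 'P <[g]> @: [set: T].
  by apply/setP=> O; apply/imsetP/imsetP=> -[x _ ->]; exists x; rewrite ?porbitE.
by apply: orbit_partition; apply/actsP=> a _ x; rewrite !inE.
Qed.

Lemma odd_perm_porbits g : ~~ odd #|T| -> odd_perm g = odd #|porbits g|.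
Proof. by rewrite /odd_perm => /negbTE->. Qed.

End PermImage.

Section CycleIndex.
Variables (T : finType) (g : {perm T}).

Definition cycle_base x := odflt x [pick y in porbit g x].

Definition cycle_index x := index x (traject g (cycle_base x) #|porbit g x|).

Lemma porbit_permE x : porbit g (g x) = porbit g x.
Proof. by have := porbit_perm g 1 x; rewrite expg1. Qed.

Lemma cycle_base_in x : cycle_base x \in porbit g x.
Proof. by rewrite /cycle_base; case: pickP => [y -> | _] //=; apply: porbit_id. Qed.

Lemma cycle_base_perm x : cycle_base (g x) = cycle_base x.
Proof.
rewrite /cycle_base porbit_permE; case: pickP => //= noy.
by have := noy x; rewrite porbit_id.
Qed.

Lemma porbit_cycle_base x : porbit g (cycle_base x) = porbit g x.
Proof. by apply/eqP; rewrite eq_porbit_mem cycle_base_in. Qed.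

Lemma uniq_traject_cycle_base x : uniq (traject g (cycle_base x) #|porbit g x|).
Proof. by rewrite -porbit_cycle_base uniq_traject_porbit. Qed.

Lemma index_traject_cycle_base x i : i < #|porbit g x| ->
  index (iter i g (cycle_base x)) (traject g (cycle_base x) #|porbit g x|) = i.
Proof.
move=> lt_i; rewrite -(nth_traject _ lt_i) index_uniq ?size_traject //.
exact: uniq_traject_cycle_base.
Qed.

Lemma mem_traject_cycle_base x : x \in traject g (cycle_base x) #|porbit g x|.
Proof. by rewrite -porbit_cycle_base -porbit_traject porbit_sym cycle_base_in. Qed.

Lemma cycle_index_lt x : cycle_index x < #|porbit g x|.
Proof.
by rewrite -[X in _ < X](size_traject g (cycle_base x)) index_mem mem_traject_cycle_base.
Qed.

Lemma iter_cycle_index x : iter (cycle_index x) g (cycle_base x) = x.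
Proof.
by rewrite -(nth_traject _ (cycle_index_lt x)) nth_index ?mem_traject_cycle_base.
Qed.

Lemma cycle_index_perm x : cycle_index (g x) = (cycle_index x).+1 %% #|porbit g x|.
Proof.
have lt_i := cycle_index_lt x.
rewrite {1}/cycle_index cycle_base_perm porbit_permE -{1}(iter_cycle_index x) -iterS.
case: (ltngtP (cycle_index x).+1 #|porbit g x|) => [lt_Si | | eq_Si].
- by rewrite modn_small // index_traject_cycle_base.
- by rewrite ltnNge lt_i.
rewrite eq_Si modnn -{1}porbit_cycle_base iter_porbit.
by rewrite -eq_Si /= eqxx.
Qed.

End CycleIndex.

Lemma even_porbits_halving (T : finType) (g : {perm T}) :
  (forall x, ~~ odd #|porbit g x|) -> exists B : {set T}, g @: B = ~: B.
Proof.
move=> even_g; exists [set x | odd (cycle_index g x)].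
apply/setP=> y; rewrite -[y](permKV g) mem_perm_imset !inE.
by rewrite cycle_index_perm odd_mod ?(negbTE (even_g _)) //= negbK.
Qed.

Lemma odd_partition_block_card (T : finType) (P : {set {set T}}) (D : {set T}) m :
  partition P D -> #|D| = (3 * m)%N -> odd #|P| ->
  {in P, forall X : {set T}, m <= #|X|} ->
  {in P, forall X : {set T}, #|X| = m \/ #|X| = (3 * m)%N}.
Proof.
move=> partP cardD oddP ge_m X PX.
have sumD : #|D| = #|X| + \sum_(Y in P :\ X) #|Y|.
  by rewrite (card_partition partP) (big_setD1 _ PX).
have lb : #|P :\ X| * m <= \sum_(Y in P :\ X) #|Y|.
  rewrite -sum_nat_const; apply: leq_sum => Y; rewrite inE => /andP[_]; exact: ge_m.
have ub : \sum_(Y in P :\ X) #|Y| <= #|P :\ X| * #|D|.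
  rewrite -sum_nat_const; apply: leq_sum => Y; rewrite inE => /andP[_ PY].
  by apply/subset_leq_card; rewrite -(cover_partition partP); apply: bigcup_sup.
move: sumD oddP lb ub; rewrite (cardsD1 X) PX add1n /= cardD.
have := ge_m X PX; case: #|P :\ X| => [|[|r]] //=; nia.
Qed.

Lemma odd_perm_large_porbits_even (T : finType) (g : {perm T}) m :
  #|T| = (3 * m)%N -> ~~ odd m -> odd_perm g -> (forall x, m <= #|porbit g x|) ->
  forall x, ~~ odd #|porbit g x|.
Proof.
move=> cardT even_m odd_g ge_m x.
rewrite odd_perm_porbits ?cardT ?oddM ?(negbTE even_m) ?andbF // in odd_g.
have gx : porbit g x \in porbits g by apply: imset_f.
have porbits_ge_m : {in porbits g, forall O : {set T}, m <= #|O|}.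
  by move=> _ /imsetP[y _ ->].
have cardsT_3m : #|[set: T]| = (3 * m)%N by rewrite cardsT.
have [] := odd_partition_block_card (partition_porbits g) cardsT_3m odd_g porbits_ge_m gx.
all: by move=> ->; rewrite ?oddM.
Qed.

Lemma set_stabE n (A : {set 'I_n}) : set_stab A = 'C[A | 'P^*].
Proof. by apply/setP=> g; rewrite inE; apply/eqP/astab1P; rewrite perm_setactE. Qed.

Lemma part_stabE n (B : {set 'I_n}) : part_stab B = 'C[[set B; ~: B] | 'P^*^*].
Proof.
apply/setP=> g; rewrite inE.
by apply/eqP/astab1P; rewrite perm_setsetactE imsetU1 imset_set1.
Qed.

Lemma mem_part_stab n (B : {set 'I_n}) g :
  (g \in part_stab B) = (g @: B == B) || (g @: B == ~: B).
Proof. by rewrite inE perm_imsetC eq_setC_pair. Qed.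

Lemma tperm_notin_set_stab n (A : {set 'I_n}) a c :
  a \in A -> c \notin A -> tperm a c \notin set_stab A.
Proof.
move=> Aa Ac; rewrite inE; apply: contra Ac => /eqP <-.
by rewrite -{1}(tpermL a c) mem_perm_imset.
Qed.

Lemma tperm_notin_part_stab n (B : {set 'I_n}) b b' c :
  b \in B -> b' \in B -> b != b' -> c \notin B -> tperm b c \notin part_stab B.
Proof.
move=> Bb Bb' neq_bb' Bc; rewrite mem_part_stab negb_or; apply/andP; split.
  by apply: contra Bc => /eqP <-; rewrite -{1}(tpermL b c) mem_perm_imset.
have neq_cb' : c != b' by apply: contraNneq Bc => ->.
apply/negP => /eqP eqC; have := mem_perm_imset (tperm b c) B b'.
by rewrite tpermD // eqC inE Bb' => /negP.
Qed.

Lemma proper_setT_notin (gT : finGroupType) (H : {set gT}) x :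
  x \notin H -> H \proper [set: gT].
Proof. by move=> Hx; rewrite properT; apply: contraNneq Hx => ->; rewrite inE. Qed.

Lemma set_stab_proper_subgroup n (A : {set 'I_n}) : 0 < #|A| < n ->
  group_set (set_stab A) /\ set_stab A \proper [set: {perm 'I_n}].
Proof.
case/andP=> /card_gt0P[a Aa] lt_An; rewrite set_stabE; split; first exact: groupP.
have /card_gt0P[c] : 0 < #|~: A| by have := cardsC A; rewrite card_ord; lia.
rewrite inE => Ac; apply: proper_setT_notin (tperm a c) _.
by rewrite -set_stabE tperm_notin_set_stab.
Qed.

Lemma part_stab_proper_subgroup n (B : {set 'I_n}) : 1 < #|B| < n ->
  group_set (part_stab B) /\ part_stab B \proper [set: {perm 'I_n}].
Proof.
case/andP=> /card_gt1P[b [b' [Bb Bb' neq_bb']]] lt_Bn.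
rewrite part_stabE; split; first exact: groupP.
have /card_gt0P[c] : 0 < #|~: B| by have := cardsC B; rewrite card_ord; lia.
rewrite inE => Bc; apply: proper_setT_notin (tperm b c) _.
by rewrite -part_stabE (tperm_notin_part_stab Bb Bb').
Qed.

Lemma Alt_proper_subgroup n : 1 < n ->
  group_set 'Alt_('I_n) /\ 'Alt_('I_n) \proper [set: {perm 'I_n}].
Proof.
move=> lt1n; split; first exact: groupP.
have /card_gt1P[x [y [_ _ neq_xy]]] : 1 < #|[set: 'I_n]| by rewrite cardsT card_ord.
by apply: proper_setT_notin (tperm x y) _; rewrite Alt_even odd_tperm neq_xy.
Qed.

Lemma cover_family_covers n (g : {perm 'I_n}) : n %% 6 = 0 ->
  exists2 H, H \in cover_family n & g \in H.
Proof.
move=> n_mod6; have [g_even | g_odd] := boolP (g \in 'Alt_('I_n)).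
  by exists ('Alt_('I_n) : {set _}); rewrite // !inE eqxx orbT.
have [/existsP[x small_x] | /existsPn large] := boolP [exists x, #|porbit g x| < n %/ 3].
  exists (set_stab (porbit g x)); last by rewrite inE porbit_perm_imset.
  rewrite !inE; apply/orP; right; apply/imsetP; exists (porbit g x) => //.
  by rewrite inE; have := card_porbit_neq0 g x; lia.
have even_g : forall x, ~~ odd #|porbit g x|.
  apply: (@odd_perm_large_porbits_even _ _ (n %/ 3)).
  - by rewrite card_ord; lia.
  - by apply/negP; lia.
  - by rewrite Alt_even negbK in g_odd.
  - by move=> x; rewrite leqNgt large.
have [B gB] := even_porbits_halving even_g.
exists (part_stab B); last by rewrite mem_part_stab gB eqxx orbT.
have cardB : #|B| = n %/ 2.
  have := cardsC B; rewrite card_ord -gB card_imset; [lia | exact: perm_inj].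
rewrite !inE; apply/orP; left; apply/orP; left.
by apply/imsetP; exists B; rewrite ?inE ?cardB.
Qed.

Theorem lemma3p3 (n : nat) (n_gt0 : 0 < n) (n_mod6 : n %% 6 = 0) :
  is_cover [set: {perm 'I_n}] (cover_family n).
Proof.
split.
- move=> H; rewrite !inE.
  case/orP=> [/orP[/imsetP[B cardB ->] | /eqP ->] | /imsetP[A cardA ->]].
  + by apply: part_stab_proper_subgroup; rewrite inE in cardB; lia.
  + by apply: Alt_proper_subgroup; lia.
  + by apply: set_stab_proper_subgroup; rewrite inE in cardA; lia.
- apply/eqP; rewrite eqEsubset subsetT; apply/subsetP=> g _.
  by have [H ? ?] := cover_family_covers g n_mod6; apply/bigcupP; exists H.
Qed.
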